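(* Let $S$ be a real sequence (data sequence), let $Q=\{Q[1],\dots,Q[n]\}$ be a query sequence of length $n$, and let $S[i:j]$ be a subsequence of $S$ with $j-i+1=n$. Let $\epsilon\ge 0$, let $\omega\ge 1$ and $p\ge 1$ be integers with $p\omega\le n$. For $k=1,\dots,p$ define the query windows $\overline{q_k}=\overline{Q}[(k-1)\omega+1 : k\omega]$ (windows of the LD-sequence $\overline{Q}$) and the data windows $s_k=S[i+(k-1)\omega : i+k\omega-1]$, and let $\mathbb{S}_k$ be the set of all LD-windows of $s_k$, i.e. $\mathbb{S}_k=\{\overline{S_{\{i',j'\}}[a_k:b_k]} : S[i':j'] \text{ is a subsequence of } S \text{ containing } s_k=S[a_k:b_k]\}$. Let $T:\mathbb{R}^\omega\to\mathbb{R}^f$ be a lower-dimensional transformation satisfying $D(T(x),T(y))\le D(x,y)$ for all $x,y\in\mathbb{R}^\omega$. If $D(\overline{Q},\overline{S[i:j]})\le\epsilon$, then there exists $k\in\{1,\dots,p\}$ such that $$D\big(T(\overline{q_k}),\,\mathbb{M}(T(\mathbb{S}_k))\big)\le \epsilon/\sqrt{p}.$$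
   Context: $D(X,Y)=\sqrt{\sum_{t}|X[t]-Y[t]|^2}$ is the Euclidean distance between sequences (or vectors) of equal length. $S[a:b]$ denotes the contiguous subsequence $S[a],S[a+1],\dots,S[b]$; a subsequence $S[i':j']$ contains $S[a:b]$ if $i'\le a\le b\le j'$. Trend line: for a sequence $X$ indexed by $k=1,\dots,m$, its trend line is the least-squares line $g(k)=\alpha k+\beta$ with $\alpha=\frac{m\sum_k kX[k]-\sum_k k\sum_k X[k]}{m\sum_k k^2-(\sum_k k)^2}$, $\beta=\frac{\sum_k X[k]}{m}-\alpha\frac{\sum_k k}{m}$. The LD-sequence (linear detrending sequence) of $X$ is $\overline{X}$ with $\overline{X}[k]=X[k]-g(k)$. For a subsequence $S[i':j']$, its trend line $g$ is the least-squares line fitted to the points $(k,S[k])$, $k=i',\dots,j'$ (equivalently, fitted after reindexing; the detrended values are the same), and $\overline{S[i':j']}$ is the corresponding LD-sequence. LD-window: if $S[a:b]$ is contained in $S[i':j']$ and $g$ is the trend line of $S[i':j']$, the LD-window of $S[a:b]$ against $S[i':j']$, denoted $\overline{S_{\{i',j'\}}[a:b]}$, is the window with entries $S[k]-g(k)$ for $k=a,\dots,b$. LD-MBR: for a set $\mathbb{S}$ of LD-windows of a window, $\mathbb{M}(T(\mathbb{S}))$ is the minimum axis-parallel bounding box in $\mathbb{R}^f$ containing all points $T(\overline{s})$, $\overline{s}\in\mathbb{S}$. The distance $D(x,\mathbb{M})$ between a point $x$ and a box $\mathbb{M}$ is $\min_{y\in\mathbb{M}}D(x,y)$. *)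

(* Real numbers are modelled by an arbitrary real closed
   field R : rcfType (which provides Num.sqrt). Sequences are 0-indexed. *)
From HB Require Import structures.
From mathcomp Require Import all_boot all_order all_algebra.

Import Order.TTheory GRing.Theory Num.Theory.
Local Open Scope ring_scope.

Definition dist {R : rcfType} {m : nat} (x y : 'rV[R]_m) : R :=
  Num.sqrt (\sum_(c < m) (x 0 c - y 0 c) ^+ 2).

(* Trend line of the subsequence X[i0 : j0] (0-indexed, inclusive), fitted
   after reindexing k = 1..m with X'[k] = X[i0 + k - 1], m = j0 - i0 + 1. *)
Definition tl_len (i0 j0 : nat) : nat := (j0 - i0).+1.

Definition tl_alpha {R : rcfType} (X : nat -> R) (i0 j0 : nat) : R :=
  let m := tl_len i0 j0 in
  let sk := \sum_(1 <= k < m.+1) (k%:R : R) in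
  let skk := \sum_(1 <= k < m.+1) (k%:R : R) ^+ 2 in
  let sx := \sum_(1 <= k < m.+1) X (i0 + k - 1)%N in
  let skx := \sum_(1 <= k < m.+1) k%:R * X (i0 + k - 1)%N in
  (m%:R * skx - sk * sx) / (m%:R * skk - sk ^+ 2).

Definition tl_beta {R : rcfType} (X : nat -> R) (i0 j0 : nat) : R :=
  let m := tl_len i0 j0 in
  let sk := \sum_(1 <= k < m.+1) (k%:R : R) in
  let sx := \sum_(1 <= k < m.+1) X (i0 + k - 1)%N in
  sx / m%:R - tl_alpha X i0 j0 * (sk / m%:R).

(* g(t) for the trend line g of X[i0 : j0], evaluated at global index t >= i0
   (local index k = t - i0 + 1). *)
Definition trend {R : rcfType} (X : nat -> R) (i0 j0 t : nat) : R :=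
  tl_alpha X i0 j0 * (t - i0).+1%:R + tl_beta X i0 j0.

Definition ld {R : rcfType} (X : nat -> R) (i0 j0 t : nat) : R :=
  X t - trend X i0 j0 t.

Definition ld_seq {R : rcfType} (X : nat -> R) (i0 n : nat) : 'rV[R]_n :=
  \row_(c < n) ld X i0 (i0 + n - 1)%N (i0 + c)%N.

Definition ld_window {R : rcfType} (X : nat -> R) (i0 j0 a w : nat) : 'rV[R]_w :=
  \row_(c < w) ld X i0 j0 (a + c)%N.

(* The set of all LD-windows of the window X[a : a + w - 1], where X has
   length N (valid indices 0 .. N-1): over all subsequences X[i0 : j0]
   containing it. *)
Definition ld_windows {R : rcfType} (X : nat -> R) (N a w : nat) (v : 'rV[R]_w) : Prop :=
  exists i0 j0 : nat,
    [/\ (i0 <= a)%N, (a + w - 1 <= j0)%N, (j0 < N)%N &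
        v = ld_window X i0 j0 a w].

(* Minimum axis-parallel bounding box of a set P of points of R^f:
   a point lies in it iff it lies in every axis-parallel box containing P. *)
Definition mbr {R : rcfType} {f : nat} (P : 'rV[R]_f -> Prop) (y : 'rV[R]_f) : Prop :=
  forall lo hi : 'rV[R]_f,
    (forall z, P z -> forall c, lo 0 c <= z 0 c <= hi 0 c) ->
    forall c, lo 0 c <= y 0 c <= hi 0 c.

Definition is_box_dist {R : rcfType} {f : nat} (x : 'rV[R]_f)
    (M : 'rV[R]_f -> Prop) (d : R) : Prop :=
  (exists2 y, M y & dist x y = d) /\ (forall y, M y -> d <= dist x y).

Definition ld_seq_window {R : rcfType} (X : nat -> R) (i0 n a w : nat) : 'rV[R]_w :=
  \row_(c < w) ld X i0 (i0 + n - 1)%N (i0 + (a + c))%N.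

From mathcomp Require Import all_boot all_order all_algebra.
From mathcomp Require Import lra zify.
Import Order.TTheory GRing.Theory Num.Theory.
Local Open Scope ring_scope.

(* Cutting the first p * w coordinates of the LD-sequences of Q and S[i:j]
   into p windows of width w splits their squared distance (at most eps^2)
   into p sums of squares, so some window pair is at distance at most
   eps / sqrt p.  The data window, detrended
   against S[i:j] itself, is one of the LD-windows, and T does not increase
   distances.  Finally the set of LD-windows is finite, so its bounding box
   is spanned by coordinatewise minima and maxima, and clamping T(q) into it
   coordinatewise yields the nearest point of the box. *)

Lemma sum_blocks (V : nmodType) (F : nat -> V) p w :
  \sum_(c < p * w) F c = \sum_(k < p) \sum_(c < w) F (k * w + c)%N.
Proof.
elim: p => [|p IHp]; first by rewrite mul0n !big_ord0.
by rewrite mulSnr big_split_ord /= IHp big_ord_recr.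
Qed.

Lemma exists_le_mean {R : realFieldType} {p} {G : 'I_p -> R} {e : R} :
  (0 < p)%N -> \sum_(k < p) G k <= e -> exists k, G k <= e / p%:R.
Proof.
move=> p_gt0 sumG; apply/existsP; apply: contraLR sumG => /existsPn allG.
have p_neq0 : p%:R != 0 :> R by rewrite pnatr_eq0 -lt0n.
have -> : e = \sum_(k < p) e / p%:R.
  by rewrite sumr_const card_ord -[_ *+ p]mulr_natr mulfVK.
rewrite -ltNge; apply: ltr_sum => [|k _]; last by rewrite ltNge allG.
by apply/hasP; exists (Ordinal p_gt0); rewrite ?mem_index_enum.
Qed.

Definition enumerates {T : eqType} (s : seq T) (P : T -> Prop) :=
  forall z, P z <-> z \in s.

Lemma enumerates_image {T U : eqType} (g : T -> U) s P :
  enumerates s P -> enumerates (map g s) (fun z => exists2 v, P v & z = g v).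
Proof.
move=> s_P z; split=> [[v /s_P v_s ->] | /mapP[v /s_P P_v ->]]; last by exists v.
exact: map_f.
Qed.

Section Windows.
Context {R : rcfType}.

(* [ld_seq X i n], [ld_seq_window] and [ld_window] are all windows of [ld X i j]. *)
Definition window (u : nat -> R) (a w : nat) : 'rV[R]_w := \row_(c < w) u (a + c)%N.

Lemma dist_ge0 m (x y : 'rV[R]_m) : 0 <= dist x y.
Proof. exact: sqrtr_ge0. Qed.

Lemma sqr_dist m (x y : 'rV[R]_m) : dist x y ^+ 2 = \sum_(c < m) (x 0 c - y 0 c) ^+ 2.
Proof. by rewrite sqr_sqrtr // sumr_ge0 // => c _; rewrite sqr_ge0. Qed.

Lemma sqr_dist_window (u v : nat -> R) a b w :
  dist (window u a w) (window v b w) ^+ 2 = \sum_(c < w) (u (a + c)%N - v (b + c)%N) ^+ 2.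
Proof. by rewrite sqr_dist; apply: eq_bigr => c _; rewrite !mxE. Qed.

Lemma exists_close_window (u v : nat -> R) a b n p w :
  (0 < p)%N -> (p * w <= n)%N ->
  exists k : 'I_p, dist (window u (a + k * w) w) (window v (b + k * w) w)
                   <= dist (window u a n) (window v b n) / Num.sqrt p%:R.
Proof.
move=> p_gt0 pw_le_n.
pose F c := (u (a + c)%N - v (b + c)%N) ^+ 2.
have dist_block (k : nat) :
    dist (window u (a + k * w) w) (window v (b + k * w) w) ^+ 2
    = \sum_(c < w) F (k * w + c)%N.
  by rewrite sqr_dist_window; apply: eq_bigr => c _; rewrite /F !addnA.
have blocks_le : \sum_(k < p) \sum_(c < w) F (k * w + c)%N
                 <= dist (window u a n) (window v b n) ^+ 2.
  rewrite -sum_blocks sqr_dist_window (big_ord_widen n F pw_le_n).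
  rewrite [leRHS](bigID (fun c : 'I_n => (c < p * w)%N)) /= lerDl.
  by rewrite sumr_ge0 // => c _; rewrite sqr_ge0.
have [k close] := exists_le_mean p_gt0 blocks_le.
exists k; rewrite -ler_sqr ?nnegrE ?divr_ge0 ?sqrtr_ge0 ?dist_ge0 //.
by rewrite dist_block expr_div_n (sqr_sqrtr (ler0n _ p)).
Qed.

End Windows.

Section Clamp.
Context {R : realDomainType}.

Definition clamp (lo hi x : R) : R := Num.max lo (Num.min x hi).

Lemma clamp_in lo hi x : lo <= hi -> lo <= clamp lo hi x <= hi.
Proof. by move=> lohi; rewrite /clamp ge_max le_max ge_min lohi !lexx !orbT. Qed.

Lemma clamp_nearest lo hi x y : lo <= y <= hi ->
  (x - clamp lo hi x) ^+ 2 <= (x - y) ^+ 2.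
Proof.
case/andP=> loy yhi; rewrite /clamp.
have [xhi|hix] := leP x hi; have [lom|mlo] := leP lo _; try nra.
by rewrite subrr expr0n sqr_ge0.
Qed.
End Clamp.

Section BoundingBox.
Context {R : rcfType} {f : nat}.

Lemma mbr_sub {P : 'rV[R]_f -> Prop} {z} : P z -> mbr P z.
Proof. by move=> Pz lo hi; apply. Qed.

Lemma box_dist_le_dist {P : 'rV[R]_f -> Prop} {x d z} :
  is_box_dist x (mbr P) d -> P z -> d <= dist x z.
Proof. by move=> [_ d_min] /mbr_sub; apply: d_min. Qed.

Context {P : 'rV[R]_f -> Prop} {s : seq 'rV[R]_f} {z0 : 'rV[R]_f}.
Hypotheses (s_P : enumerates s P) (P_z0 : P z0).

Definition box_lo : 'rV[R]_f := \row_c \big[Num.min/z0 0 c]_(z <- s) z 0 c.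
Definition box_hi : 'rV[R]_f := \row_c \big[Num.max/z0 0 c]_(z <- s) z 0 c.

Lemma mbr_boxP y : mbr P y <-> forall c, box_lo 0 c <= y 0 c <= box_hi 0 c.
Proof.
split=> [y_in c | y_in lo hi P_in c].
  apply: y_in => z /s_P z_s {}c.
  rewrite !mxE; apply/andP; split.
    exact: (ge_bigmin_seq _ _ _ (fun z1 : 'rV_f => z1 0 c) z_s).
  exact: (le_bigmax_seq _ _ _ (fun z1 : 'rV_f => z1 0 c) z_s).
have /andP[lo_z0 z0_hi] := P_in _ P_z0 c.
have /andP[lo_y y_hi] := y_in c.
rewrite !mxE big_seq in lo_y; rewrite !mxE big_seq in y_hi.
rewrite (le_trans _ lo_y) ?(le_trans y_hi) //.
  by apply: bigmax_le => // z /s_P /P_in /(_ c) /andP[].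
by apply: le_bigmin => // z /s_P /P_in /(_ c) /andP[].
Qed.

Definition box_proj (x : 'rV[R]_f) : 'rV[R]_f :=
  \row_c clamp (box_lo 0 c) (box_hi 0 c) (x 0 c).

Lemma box_lo_le_hi c : box_lo 0 c <= box_hi 0 c.
Proof.
by have /mbr_boxP/(_ c)/andP[lo_z0 z0_hi] := mbr_sub P_z0; apply: le_trans z0_hi.
Qed.

Lemma box_proj_mbr x : mbr P (box_proj x).
Proof. by apply/mbr_boxP => c; rewrite [box_proj x 0 c]mxE clamp_in ?box_lo_le_hi. Qed.

Lemma box_proj_nearest x y : mbr P y -> dist x (box_proj x) <= dist x y.
Proof.
move=> /mbr_boxP y_in; apply: ler_wsqrtr; apply: ler_sum => c _.
by rewrite [box_proj x 0 c]mxE clamp_nearest.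
Qed.

Lemma is_box_dist_proj x : is_box_dist x (mbr P) (dist x (box_proj x)).
Proof. split; [exists (box_proj x) => //; exact: box_proj_mbr | exact: box_proj_nearest]. Qed.

End BoundingBox.

Section LDWindows.
Context {R : rcfType}.

Lemma ld_window_in_ld_windows (X : nat -> R) N i n o w :
  (i + n <= N)%N -> (0 < w)%N -> (o + w <= n)%N ->
  ld_windows X N (i + o) w (ld_window X i (i + n - 1) (i + o) w).
Proof. by move=> iN w_gt0 ow_le_n; exists i, (i + n - 1)%N; split=> //; lia. Qed.

Lemma ld_windows_enumerated (X : nat -> R) N a w :
  enumerates [seq ld_window X i0 j0 a w | i0 <- iota 0 a.+1,
                                          j0 <- iota (a + w - 1) (N - (a + w - 1))]
             (ld_windows X N a w).
Proof.
move=> v; split=> [[i0 [j0 [i0_le j0_ge j0_lt ->]]] | /allpairsP[[i0 j0]]].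
  by apply/allpairsP; exists (i0, j0); rewrite !mem_iota; split=> //=; lia.
by rewrite !mem_iota /= => -[i0_in j0_in ->]; exists i0, j0; split=> //; lia.
Qed.

End LDWindows.

Theorem theorem1 (R : rcfType) (N : nat) (S : nat -> R) (n : nat) (Q : nat -> R)
    (i : nat) (eps : R) (w p f : nat) (T : 'rV[R]_w -> 'rV[R]_f) :
  (i + n <= N)%N ->
  0 <= eps ->
  (1 <= w)%N -> (1 <= p)%N -> (p * w <= n)%N ->
  (forall x y : 'rV[R]_w, dist (T x) (T y) <= dist x y) ->
  dist (ld_seq Q 0 n) (ld_seq S i n) <= eps ->
  exists k : 'I_p, exists d : R,
    is_box_dist
      (T (ld_seq_window Q 0 n (k * w)%N w))
      (mbr (fun z => exists2 s, ld_windows S N (i + k * w)%N w s & z = T s))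
      d
    /\ d <= eps / Num.sqrt (p%:R).
Proof.
move=> iN _ w_gt0 p_gt0 pw_le_n T_contr close.
have [k close_k] :=
  exists_close_window (ld Q 0 (0 + n - 1)) (ld S i (i + n - 1)) 0 i _ _ _ p_gt0 pw_le_n.
set q := ld_seq_window Q 0 n (k * w) w.
set s := ld_window S i (i + n - 1) (i + k * w) w.
have kw_le_n : (k * w + w <= n)%N by have := ltn_ord k; nia.
have s_in := ld_window_in_ld_windows S N i n (k * w) w iN w_gt0 kw_le_n.
have T_enum := enumerates_image T _ _ (ld_windows_enumerated S N (i + k * w) w).
have Ts_P : exists2 s', ld_windows S N (i + k * w) w s' & T s = T s' by exists s.
have Tq_box := is_box_dist_proj T_enum Ts_P (T q).
exists k; eexists; split; first exact: Tq_box.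
apply: le_trans (box_dist_le_dist Tq_box Ts_P) _.
apply: le_trans (T_contr q s) _; apply: le_trans close_k _.
by rewrite ler_wpM2r ?invr_ge0 ?sqrtr_ge0.
Qed.
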